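(* Let $n\ge1$ and let $A$ be an admissible set in $\{1,3,\dots,2n+1\}$ with associated vector $(a(1),\dots,a(2n))$. Let $\widehat{A}$ be the set of primary odd-odd-descent permutations $\sigma\in\mathcal{W}^*_{2n+1}$ whose set of valleys is exactly the set of white elements of $A$ and whose set of peaks is exactly the set of black elements of $A$. Then \[ \sum_{\sigma\in\widehat{A}} q^{\mathrm{art}(\sigma)}=\prod_{i=1}^{2n}[a(i)]_q . \]
   Context: $[k]_q=1+q+\cdots+q^{k-1}$. For $\sigma\in\mathfrak{S}_m$, a descent is an index $i$ with $\sigma_i>\sigma_{i+1}$; $\mathcal{W}^*_{2n+1}$ is the set of permutations of $[2n+1]$ whose every descent pair $(\sigma_i,\sigma_{i+1})$ consists of two odd numbers and whose last entry is odd. With $\sigma_0=\sigma_{m+1}=0$, $\sigma_i$ is a peak if $\sigma_{i-1}<\sigma_i>\sigma_{i+1}$, a valley if $\sigma_{i-1}>\sigma_i<\sigma_{i+1}$, a double descent if $\sigma_{i-1}>\sigma_i>\sigma_{i+1}$. $\mathrm{art}(\sigma)=\sum_{i=1}^m(v(i)-p(i))$, where $v(i)$ (resp. $p(i)$) counts valleys (resp. peaks) less than $i$ located to the left of $i$ in $\sigma$. $\sigma\in\mathcal{W}^*_{2n+1}$ is primary odd-odd-descent if it has no double descent and $\sigma_{2n}<\sigma_{2n+1}$. An admissible set in $\{1,3,\dots,2n+1\}$ is a set $A$ of odd numbers in $\{1,3,\dots,2n+1\}$, each colored white or black, such that: (i) $A$ has $k$ white and $k+1$ black elements for some $k\ge0$,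 and $2n+1$ is black; (ii) for each $i\in[2n]$, $A\cap\{1,\dots,i\}$ has at least as many white as black elements. Its vector is $a(i)=f(i)-g(i)+1$ for $1\le i\le 2n$, where $f(i)$ (resp. $g(i)$) is the number of white (resp. black) elements of $A$ less than $i$. *)

From mathcomp Require Import all_boot all_order all_algebra all_fingroup.
Set Implicit Arguments. Unset Strict Implicit. Unset Printing Implicit Defensive.
Import GRing.Theory Num.Theory.

(* sigma_i for a permutation s of {0..m-1}, read as a permutation of [m]
   (entry at position i, 1 <= i <= m, is (s (i-1)).+1); sigma_0 = sigma_{m+1} = 0. *)
Definition sv m (s : 'S_m) (i : nat) : nat :=
  nth 0 (0 :: [seq (s j).+1 | j <- enum 'I_m]) i.

Definition is_peak_pos m (s : 'S_m) (i : nat) : bool :=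
  [&& 0 < i, i <= m, sv s i.-1 < sv s i & sv s i.+1 < sv s i].
Definition is_valley_pos m (s : 'S_m) (i : nat) : bool :=
  [&& 0 < i, i <= m, sv s i < sv s i.-1 & sv s i < sv s i.+1].
Definition is_ddes_pos m (s : 'S_m) (i : nat) : bool :=
  [&& 0 < i, i <= m, sv s i < sv s i.-1 & sv s i.+1 < sv s i].

Definition in_Wstar m (s : 'S_m) : bool :=
  [forall i : 'I_m, (i.+1 < m) ==> (sv s i.+2 < sv s i.+1) ==>
                    odd (sv s i.+1) && odd (sv s i.+2)] && odd (sv s m).

Definition primary n (s : 'S_(n.*2.+1)) : bool :=
  [&& in_Wstar s, [forall i : 'I_(n.*2.+1), ~~ is_ddes_pos s i.+1]
    & sv s n.*2 < sv s n.*2.+1].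

Definition valley_val m (s : 'S_m) (x : nat) : bool :=
  [exists i : 'I_m, is_valley_pos s i.+1 && (sv s i.+1 == x)].
Definition peak_val m (s : 'S_m) (x : nat) : bool :=
  [exists i : 'I_m, is_peak_pos s i.+1 && (sv s i.+1 == x)].

(* art(sigma) = sum_{i=1}^m (v(i) - p(i)); the value i = y.+1 sits at position
   (s^-1 y).+1, and position j.+1 holds the value (s j).+1. *)
Definition vcount m (s : 'S_m) (y : 'I_m) : nat :=
  #|[set j : 'I_m | [&& is_valley_pos s j.+1, s j < y & j < (s^-1)%g y]]|.
Definition pcount m (s : 'S_m) (y : 'I_m) : nat :=
  #|[set j : 'I_m | [&& is_peak_pos s j.+1, s j < y & j < (s^-1)%g y]]|.
Definition art m (s : 'S_m) : int :=
  \sum_(y : 'I_m) ((vcount s y)%:Z - (pcount s y)%:Z).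

(* admissible set: W = white elements, B = black elements (values in 0..2n+1) *)
Definition admissible n (W B : {set 'I_(n.*2.+2)}) : bool :=
  [&& [disjoint W & B],
      [forall x in W :|: B, odd x],
      #|B| == #|W|.+1,
      (ord_max : 'I_(n.*2.+2)) \in B &
      [forall i : 'I_(n.*2.+1), (0 < i) ==>
         (#|[set x in B | x <= i]| <= #|[set x in W | x <= i]|)]].

(* a(i) = f(i) - g(i) + 1 (nonnegative for admissible sets) *)
Definition avec n (W B : {set 'I_(n.*2.+2)}) (i : nat) : nat :=
  #|[set x in W | x < i]|.+1 - #|[set x in B | x < i]|.

Definition qint (R : ringType) (q : R) (k : nat) : R := \sum_(j < k) q ^+ j.

Definition hatA n (W B : {set 'I_(n.*2.+2)}) (s : 'S_(n.*2.+1)) : bool :=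
  [&& primary s,
      [set x : 'I_(n.*2.+2) | valley_val s x] == W &
      [set x : 'I_(n.*2.+2) | peak_val s x] == B].

From mathcomp Require Import all_boot all_order all_algebra all_fingroup.
From mathcomp Require Import zify ring.
Import GRing.Theory Num.Theory.
Set Implicit Arguments. Unset Strict Implicit. Unset Printing Implicit Defensive.

(* Encode sigma in W*_(2n+1) by its word sigma_1 ... sigma_(2n+1), and colour
   the letters of the admissible set: white = W (future valleys), black = B
   (future peaks).  Call a word compatible when every black letter is followed
   by a smaller white one and every descent ends on a white letter.  Words are
   built by inserting the letters 1, 2, ..., 2n+1 in increasing order; the new
   maximal letter may only go to a "free" gap (not after a black letter, and
   before a white letter or at the end), and inserting it there raises the art
   statistic by the total weight (+1 per white, -1 per black letter) of the
   prefix before the gap.  The generating polynomial of the free gaps of a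
   compatible word with c_w white and c_b black letters is [c_w + 1 - c_b]_q
   (gap_sum_qint), so summing over compatible words gives a product of
   q-integers (sum_words).  Finally, for an admissible set, sigma belongs to
   \hat A exactly when its word is compatible (hatA_iff), the art statistics
   agree (art_word_of), and the factors are the [a(i)]_q (count_iota_avec,
   avec_last). *)

Lemma qintS (R : nzRingType) (q : R) k : qint q k.+1 = (1 + q * qint q k)%R.
Proof.
rewrite /qint big_ord_recl expr0 mulr_sumr; congr (_ + _)%R.
by apply: eq_bigr => i _; rewrite exprS.
Qed.

Section CompatibleWords.
Variables (w b : pred nat).
Hypothesis white_not_black : forall x, w x -> ~~ b x.

Definition good_step (x y : nat) : bool :=
  (b x ==> w y && (y < x)) && (~~ w y ==> (x < y)).

Definition compatible (t : seq nat) : bool := sorted good_step t.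

Lemma compatible_cons x u :
  compatible (x :: u) = (if u is y :: _ then good_step x y else true) && compatible u.
Proof. by case: u. Qed.

Lemma compatible_black_next x y u : compatible [:: x, y & u] -> b x -> w y.
Proof. by case/andP=> /andP[/implyP h _] _ /h /andP[]. Qed.

(* Gap k of a word t lies between its letters k-1 and k (gap 0 is the front,
   gap [size t] the end).  It is free when the letter before it is not black
   and the letter after it is white; free gaps are exactly where a new
   maximal letter may be inserted without breaking compatibility. *)
Definition gap_ok (t : seq nat) (k : nat) : bool :=
  ((k == 0) || ~~ b (nth 0 t k.-1)) && ((k == size t) || w (nth 0 t k)).

Lemma gap_ok_cons x t k : gap_ok (x :: t) k.+1 = gap_ok t k && ((k != 0) || ~~ b x).
Proof. by case: k => [|k]; rewrite /gap_ok /= ?andbT // andbC. Qed.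

Lemma compatible_balance t :
  compatible t -> count b t + gap_ok t 0 <= count w t + 1.
Proof.
elim: t => [|x t IH] // ct.
have ct' : compatible t by move: ct; rewrite compatible_cons => /andP[].
have := IH ct'; rewrite /gap_ok /=.
case wx: (w x); first by rewrite (negbTE (white_not_black wx)); lia.
case bx: (b x) => //=; last by lia.
case: t ct {IH ct'} => [|y u] ct; first by [].
by rewrite /= (compatible_black_next ct bx); lia.
Qed.

Local Open Scope ring_scope.

(* A valley contributes +1 to art, a peak -1: the weight of a letter. *)
Definition weight (x : nat) : int := (w x)%:Z - (b x)%:Z.

(* Total weight of the first k letters: the art increase caused by inserting a maximal letter at gap k. *)
Definition prefix_weight (t : seq nat) (k : nat) : int := \sum_(x <- take k t) weight x.

Fixpoint art_word (t : seq nat) : int :=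
  if t is x :: u then weight x * (count (fun y => x < y)%N u)%:Z + art_word u else 0.

Lemma art_word_cons x u :
  art_word (x :: u) = weight x * (count (fun y => x < y)%N u)%:Z + art_word u.
Proof. by []. Qed.

Definition gap_sum (R : unitRingType) (q : R) (t : seq nat) : R :=
  \sum_(0 <= k < (size t).+1 | gap_ok t k) q ^ prefix_weight t k.

Lemma prefix_weight0 t : prefix_weight t 0%N = 0.
Proof. by rewrite /prefix_weight take0 big_nil. Qed.

Lemma prefix_weight_cons x t k : prefix_weight (x :: t) k.+1 = weight x + prefix_weight t k.
Proof. by rewrite /prefix_weight /= big_cons. Qed.

Lemma gap_sum_cons (R : comUnitRingType) (q : R) x t : q \is a GRing.unit ->
  gap_sum q (x :: t) = (w x)%:R + q ^ weight x * (gap_sum q t - (gap_ok t 0%N && b x)%:R).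
Proof.
move=> qu; rewrite /gap_sum big_mkcond big_nat_recl //=.
under eq_bigr => k _ do rewrite gap_ok_cons prefix_weight_cons exprzDr //.
rewrite big_nat_recl // [in RHS]big_mkcond [in RHS]big_nat_recl //= !prefix_weight0.
have -> : gap_ok (x :: t) 0%N = w x by rewrite /gap_ok.
set S := (X in _ + (_ + X) = _); set S' := (X in _ = _ + _ * (_ + X - _)).
have -> : S = q ^ weight x * S'.
  by rewrite /S /S' mulr_sumr; apply: eq_bigr => k _; rewrite andbT; case: ifP; rewrite ?mulr0.
rewrite ?addr0 !expr0z ?mulr1; case: (w x); case: (gap_ok t 0); case: (b x) => /=; ring.
Qed.

Lemma gap_ok_head_black x t : compatible (x :: t) -> b x -> gap_ok t 0%N.
Proof. by case: t => [|y u] //= ct bx; rewrite /gap_ok /= (compatible_black_next ct bx). Qed.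

Lemma gap_sum_qint (R : fieldType) (q : R) t : q != 0 -> compatible t ->
  gap_sum q t = qint q (count w t + 1 - count b t).
Proof.
move=> hq; have qu : q \is a GRing.unit by rewrite unitfE.
elim: t => [|x t IH] ct.
  by rewrite /gap_sum big_mkcond big_nat1 /gap_ok /= prefix_weight0 expr0z /qint big_ord1.
have ct' : compatible t by move: ct; rewrite compatible_cons => /andP[].
have bal := compatible_balance ct'.
rewrite gap_sum_cons // IH // /weight /=.
case wx: (w x).
  rewrite (negbTE (white_not_black wx)) andbF subr0 expr1z /=.
  have -> : (1 + count w t + 1 - (0 + count b t) = (count w t + 1 - count b t).+1)%N by lia.
  by rewrite qintS subr0.
case bx: (b x) => /=; last by rewrite andbF !subr0 expr0z mul1r add0r.
move: bal; rewrite (gap_ok_head_black ct bx) /= => bal.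
have -> : (count w t + 1 - count b t = (count w t - count b t).+1)%N by lia.
have -> : (0 + count w t + 1 - (1 + count b t) = count w t - count b t)%N by lia.
by rewrite qintS (addrC 1) addrK add0r (_ : 0 - 1 = -1)%R // exprN1 mulKf.
Qed.

(* Specialisation q = 1: a compatible word with one more black than white
   letter has no free gap at all. *)
Lemma no_free_gap t : compatible t -> (count w t + 1 = count b t)%N ->
  forall k, (k <= size t)%N -> ~~ gap_ok t k.
Proof.
move=> ct hc k hk; apply/negP => gk.
have := gap_sum_qint (oner_neq0 rat) ct; rewrite hc subnn /qint big_ord0 /gap_sum.
rewrite (eq_bigr (fun _ => 1%:R)); last by move=> i _; rewrite exp1rz.
rewrite -natr_sum sum1_count => /eqP; rewrite pnatr_eq0 -leqn0 leqNgt -has_count => /negP.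
by apply; apply/hasP; exists k => //; rewrite mem_index_iota; lia.
Qed.

End CompatibleWords.

Definition insert_at (t : seq nat) (k M : nat) : seq nat := take k t ++ M :: drop k t.

Lemma insert_at0 t M : insert_at t 0 M = M :: t.
Proof. by rewrite /insert_at take0 drop0. Qed.

Lemma insert_at_cons x t k M : insert_at (x :: t) k.+1 M = x :: insert_at t k M.
Proof. by []. Qed.

Lemma perm_insert_at t k M : perm_eq (insert_at t k M) (M :: t).
Proof.
rewrite /insert_at -{3}(cat_take_drop k t).
by rewrite -cat1s perm_catCA.
Qed.

Lemma remove_insert_at t k M : M \notin t -> k <= size t ->
  rem M (insert_at t k M) = t /\ index M (insert_at t k M) = k.
Proof.
elim: t k => [|x t IH] [|k]; rewrite ?insert_at0 ?insert_at_cons /= ?eqxx //.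
rewrite inE negb_or ltnS => /andP[xM hM] hk.
by rewrite eq_sym (negbTE xM) /=; case: (IH k hM hk) => -> ->.
Qed.

Lemma count_above_max (M : nat) t : all (fun x => x < M) t -> count (fun y => M < y) t = 0.
Proof.
elim: t => //= x t IH /andP[xM h]; rewrite IH // addn0.
by have -> : (M < x) = false by rewrite ltnNge ltnW.
Qed.

Section Insertion.
Variables (w b : pred nat).

Lemma good_step_before_max x M : good_step w b x M -> x < M -> ~~ b x.
Proof.
by case/andP=> /implyP h _ xM; apply/negP => /h /andP[_]; rewrite ltnNge ltnW.
Qed.

Lemma good_step_after_max z M : good_step w b M z -> z < M -> w z.
Proof.
by case/andP=> _ /implyP h zM; apply/negPn/negP => /h; rewrite ltnNge ltnW.
Qed.

Lemma art_word_insert t k M : all (fun x => x < M) t ->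
  art_word w b (insert_at t k M) = (art_word w b t + prefix_weight w b t k)%R.
Proof.
elim: t k => [|x t IH] [|k] hall; rewrite ?insert_at0 ?insert_at_cons.
- by rewrite /= prefix_weight0 ?mulr0 ?addr0.
- by rewrite /= /prefix_weight big_nil ?mulr0 ?addr0.
- by rewrite prefix_weight0 addr0 art_word_cons count_above_max // mulr0 add0r.
move: hall => /andP[xM hall]; rewrite /= IH // prefix_weight_cons.
rewrite (seq.permP (perm_insert_at t k M)) /= xM add1n -addn1 PoszD mulrDr mulr1.
ring.
Qed.

Lemma compatible_insert t k M : compatible w b t -> k <= size t -> gap_ok w b t k ->
  all (fun x => x < M) t -> compatible w b (insert_at t k M).
Proof.
elim: t k => [|x t IH] [|k] //.
- rewrite insert_at0 => ct _ gk /andP[xM _]; have {}gk : w x := gk.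
  by rewrite compatible_cons ct andbT /good_step gk xM implybT.
rewrite [size _]/= ltnS gap_ok_cons => ct hk /andP[gk hx] /andP[xM hall].
have ct' : compatible w b t by move: ct; rewrite compatible_cons => /andP[].
rewrite insert_at_cons compatible_cons IH // andbT.
case: k hk gk hx {IH} => [|k] hk gk hx.
  by move: hx => /= hx; rewrite insert_at0 /good_step (negbTE hx) xM implybT.
by case: t ct hk {ct' hall gk} => // y t /andP[].
Qed.

Lemma good_step_skip_max x M z : good_step w b x M -> good_step w b M z ->
  x < M -> z < M -> good_step w b x z.
Proof.
move=> hxM hMz xM zM.
by rewrite /good_step (negbTE (good_step_before_max hxM xM)) (good_step_after_max hMz zM).
Qed.

Lemma compatible_remove_max t M : compatible w b t -> uniq t -> M \in t ->
  all (fun x => x <= M) t -> compatible w b (rem M t) && gap_ok w b (rem M t) (index M t).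
Proof.
elim: t => [|x t IH] // ct /andP[xt ut]; rewrite inE => hM /andP[xM hall].
have ct' : compatible w b t by move: ct; rewrite compatible_cons => /andP[].
have [exM|nxM] := eqVneq x M.
  subst x; rewrite /= eqxx ct' /gap_ok /=.
  case: t ct xt hall {IH ct' ut hM} => // y t /andP[hMy _].
  rewrite inE negb_or => /andP[yM _] /andP[yleM _].
  by rewrite (good_step_after_max hMy) // ltn_neqAle eq_sym yM.
have xltM : x < M by rewrite ltn_neqAle nxM.
move: hM; rewrite eq_sym (negbTE nxM) /= => hM; rewrite (negbTE nxM).
case/andP: (IH ct' ut hM hall) => crem grem.
rewrite gap_ok_cons grem compatible_cons crem !andbT.
case: t ct hM hall ut {IH ct' crem grem xt} => // y t /andP[hxy cyt] _ /andP[yleM hall] ut /=.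
have [eyM|nyM] := eqVneq y M; last by rewrite hxy.
subst y; rewrite /= (good_step_before_max hxy xltM) andbT.
case: t cyt hall ut => // z t /andP[hMz _] /andP[zleM _] /andP[]; rewrite inE negb_or => /andP[Mz _] _.
by apply: good_step_skip_max hxy hMz xltM _; rewrite ltn_neqAle eq_sym Mz.
Qed.

End Insertion.

Lemma insert_at_remove t M : M \in t ->
  insert_at (rem M t) (index M t) M = t /\ index M t <= size (rem M t).
Proof.
elim: t => [|x t IH] //; rewrite inE.
have [->|nxM] := eqVneq x M; first by rewrite /= eqxx insert_at0.
rewrite /= => hM.
by rewrite (negbTE nxM); case: (IH hM) => e le; rewrite insert_at_cons e.
Qed.

Lemma insert_at_inj M t1 t2 k1 k2 : M \notin t1 -> M \notin t2 ->
  k1 <= size t1 -> k2 <= size t2 -> insert_at t1 k1 M = insert_at t2 k2 M ->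
  t1 = t2 /\ k1 = k2.
Proof.
move=> M1 M2 k1t k2t e.
case: (remove_insert_at M1 k1t) (remove_insert_at M2 k2t) => r1 i1 [r2 i2].
by split; [rewrite -r1 e r2 | rewrite -i1 e i2].
Qed.

Lemma iota_succ_perm i : perm_eq (i.+1 :: iota 1 i) (iota 1 i.+1).
Proof.
have -> : iota 1 i.+1 = iota 1 i ++ [:: i.+1] by rewrite -[i.+1]addn1 iotaD addnC.
by rewrite -cat1s perm_catC.
Qed.

Section WordsOfLength.
Variables (w b : pred nat).

Definition words (i : nat) : seq (seq nat) :=
  [seq t <- permutations (iota 1 i) | compatible w b t].

Definition free_gaps (t : seq nat) : seq nat := [seq k <- iota 0 (size t).+1 | gap_ok w b t k].

Lemma mem_words i t : (t \in words i) = compatible w b t && perm_eq t (iota 1 i).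
Proof. by rewrite mem_filter mem_permutations. Qed.

Lemma mem_free_gaps t k : (k \in free_gaps t) = gap_ok w b t k && (k <= size t).
Proof. by rewrite mem_filter mem_iota add0n ltnS. Qed.

Lemma words_below i t : t \in words i -> i.+1 \notin t /\ all (fun x => x < i.+1) t.
Proof.
rewrite mem_words => /andP[_ /perm_mem pt]; split; first by rewrite pt mem_iota; lia.
by apply/allP => x; rewrite pt mem_iota; lia.
Qed.

Lemma insert_free_gap_word i t k :
  t \in words i -> k \in free_gaps t -> insert_at t k i.+1 \in words i.+1.
Proof.
move=> ht; rewrite mem_free_gaps => /andP[gk le]; have [_ below] := words_below ht.
move: ht; rewrite !mem_words => /andP[ct pt].
rewrite compatible_insert // andTb; apply: perm_trans (perm_insert_at t k i.+1) _.
by apply: perm_trans _ (iota_succ_perm i); rewrite perm_cons.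
Qed.

Lemma remove_max_word i u : u \in words i.+1 ->
  [/\ rem i.+1 u \in words i, index i.+1 u \in free_gaps (rem i.+1 u)
    & u = insert_at (rem i.+1 u) (index i.+1 u) i.+1].
Proof.
rewrite mem_words => /andP[cu pu].
have Mu : i.+1 \in u by rewrite (perm_mem pu) mem_iota; lia.
have uu : uniq u by rewrite (perm_uniq pu) iota_uniq.
have hall : all (fun x => x <= i.+1) u by apply/allP => x; rewrite (perm_mem pu) mem_iota; lia.
case/andP: (compatible_remove_max cu uu Mu hall) => crem grem.
case: (insert_at_remove Mu) => e le; split; last by rewrite e.
- have pr : perm_eq (i.+1 :: rem i.+1 u) u by rewrite perm_sym -{1}e perm_insert_at.
  rewrite mem_words crem andTb -(perm_cons i.+1).
  by apply: perm_trans pr (perm_trans pu _); rewrite perm_sym iota_succ_perm.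
by rewrite mem_free_gaps grem le.
Qed.

Lemma words_step i :
  perm_eq [seq insert_at t k i.+1 | t <- words i, k <- free_gaps t] (words i.+1).
Proof.
apply: uniq_perm.
- apply: allpairs_uniq_dep => [||[t1 k1] [t2 k2]].
  + by rewrite filter_uniq // permutations_uniq.
  + by move=> t _; rewrite filter_uniq // iota_uniq.
  move=> /allpairsPdep[t1' [k1' [h1 g1 [-> ->]]]] /allpairsPdep[t2' [k2' [h2 g2 [-> ->]]]] /= e.
  move: g1 g2; rewrite !mem_free_gaps => /andP[_ le1] /andP[_ le2].
  have [M1 _] := words_below h1; have [M2 _] := words_below h2.
  by case: (insert_at_inj M1 M2 le1 le2 e) => -> ->.
- by rewrite filter_uniq // permutations_uniq.
move=> u; apply/allpairsPdep/idP => [[t [k [ht hk ->]]]|hu].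
  exact: insert_free_gap_word.
by case: (remove_max_word hu) => hr hg e; exists (rem i.+1 u), (index i.+1 u).
Qed.

End WordsOfLength.

Lemma sum_words (w b : pred nat) (R : fieldType) (q : R) i :
  (forall x, w x -> ~~ b x) -> q != 0%R ->
  (\sum_(t <- words w b i) q ^ art_word w b t =
   \prod_(0 <= j < i) qint q (count w (iota 1 j) + 1 - count b (iota 1 j))%N)%R.
Proof.
move=> wb hq; have qu : q \is a GRing.unit by rewrite unitfE.
elim: i => [|i IH]; first by rewrite /words /= big_cons big_nil big_geq // addr0 expr0z.
rewrite big_nat_recr //= -IH -(perm_big _ (words_step w b i)) big_allpairs_dep mulr_suml.
apply: eq_big_seq => t ht; have [_ below] := words_below ht.
move: ht; rewrite mem_words => /andP[ct pt].
under eq_bigr => k _ do rewrite art_word_insert // exprzDr //.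
rewrite -mulr_sumr /free_gaps big_filter; congr (_ * _)%R.
have -> : (\sum_(k <- iota 0 (size t).+1 | gap_ok w b t k) q ^ prefix_weight w b t k)%R
          = gap_sum w b q t by rewrite /gap_sum /index_iota subn0.
by rewrite gap_sum_qint // !(seq.permP pt).
Qed.

Definition word_of m (s : 'S_m) : seq nat := [seq (s j).+1 | j <- enum 'I_m].

Lemma size_word_of m (s : 'S_m) : size (word_of s) = m.
Proof. by rewrite size_map size_enum_ord. Qed.

Lemma nth_word_of m (s : 'S_m) (j : 'I_m) : nth 0 (word_of s) j = (s j).+1.
Proof. by rewrite (nth_map j) ?size_enum_ord // nth_ord_enum. Qed.

Lemma word_of_inj m : injective (@word_of m).
Proof.
move=> s1 s2 e; apply/permP => j; apply/val_inj.
by have := nth_word_of s1 j; rewrite e nth_word_of => -[].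
Qed.

Lemma perm_word_of m (s : 'S_m) : perm_eq (word_of s) (iota 1 m).
Proof.
have -> : iota 1 m = map succn (iota 0 m) by rewrite (iotaDl 1 0).
rewrite /word_of (map_comp succn (fun j => val (s j))) perm_map //.
rewrite (map_comp val s) -val_enum_ord perm_map //.
apply: uniq_perm; first by rewrite map_inj_uniq ?enum_uniq //; apply: perm_inj.
  exact: enum_uniq.
move=> x; rewrite mem_enum; apply/mapP; exists ((s^-1)%g x); first by rewrite mem_enum.
by rewrite permKV.
Qed.

Lemma uniq_word_of m (s : 'S_m) : uniq (word_of s).
Proof. by rewrite (perm_uniq (perm_word_of s)) iota_uniq. Qed.

Lemma word_of_pos m (s : 'S_m) : all (fun x => 0 < x) (word_of s).
Proof. by apply/allP => x /mapP[j _ ->]. Qed.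

Lemma word_of_surj m t : perm_eq t (iota 1 m) -> exists s : 'S_m, word_of s = t.
Proof.
move=> pt.
have st : size t = m by rewrite (perm_size pt) size_iota.
have ut : uniq t by rewrite (perm_uniq pt) iota_uniq.
have rng : forall j, j < m -> 0 < nth 0 t j <= m.
  move=> j jm; have : nth 0 t j \in iota 1 m by rewrite -(perm_mem pt) mem_nth // st.
  by rewrite mem_iota; lia.
pose f := fun j : 'I_m => insubd j (nth 0 t j).-1.
have fv : forall j : 'I_m, val (f j) = (nth 0 t j).-1.
  move=> j; rewrite val_insubd; case: ifP => //.
  by have := rng j (ltn_ord j); lia.
have finj : injective f.
  move=> j1 j2 /(congr1 val); rewrite !fv => e.
  apply/val_inj/eqP; rewrite -(nth_uniq 0 _ _ ut) ?st ?ltn_ord //.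
  case/andP: (rng j1 (ltn_ord j1)) => a1 _; case/andP: (rng j2 (ltn_ord j2)) => a2 _.
  by apply/eqP; rewrite -(prednK a1) -(prednK a2) e.
exists (perm finj); apply: (@eq_from_nth _ 0); first by rewrite size_word_of st.
move=> i; rewrite size_word_of => im.
rewrite (nth_word_of _ (Ordinal im)) permE fv /=.
by have := rng i im; lia.
Qed.

Lemma sum_perm_words (R : nmodType) m (P : pred (seq nat)) (F : seq nat -> R) :
  (\sum_(s : 'S_m | P (word_of s)) F (word_of s) = \sum_(t <- permutations (iota 1 m) | P t) F t)%R.
Proof.
rewrite -(big_map (@word_of m) P F); apply: perm_big.
apply: uniq_perm.
- by rewrite map_inj_uniq ?index_enum_uniq //; apply: word_of_inj.
- exact: permutations_uniq.
move=> t; rewrite mem_permutations; apply/mapP/idP.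
  by move=> [s _ ->]; apply: perm_word_of.
by move=> /word_of_surj [s <-]; exists s => //; rewrite mem_index_enum.
Qed.

Definition letter (t : seq nat) (i : nat) : nat := nth 0 (0 :: t) i.

Definition peak_at t i :=
  [&& 0 < i, i <= size t, letter t i.-1 < letter t i & letter t i.+1 < letter t i].
Definition valley_at t i :=
  [&& 0 < i, i <= size t, letter t i < letter t i.-1 & letter t i < letter t i.+1].
Definition ddes_at t i :=
  [&& 0 < i, i <= size t, letter t i < letter t i.-1 & letter t i.+1 < letter t i].

Lemma letter_out t i : size t < i -> letter t i = 0.
Proof. by case: i => // i; rewrite /letter /= ltnS => h; rewrite nth_default. Qed.

Lemma letter_pos t i : all (fun x => 0 < x) t -> 0 < i -> i <= size t -> 0 < letter t i.
Proof. by move=> /allP h; case: i => // i _ hi; apply: h; apply: mem_nth. Qed.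

Lemma letter_inj t i j : uniq t -> 0 < i -> i <= size t -> 0 < j -> j <= size t ->
  letter t i = letter t j -> i = j.
Proof.
case: i => // i; case: j => // j ut _ hi _ hj; rewrite /letter /= => /eqP.
by rewrite nth_uniq // => /eqP ->.
Qed.

Section Letters.
Variables (w b : pred nat).

Lemma compatibleP t : compatible w b t <->
  (forall i, 0 < i -> i < size t -> good_step w b (letter t i) (letter t i.+1)).
Proof.
elim: t => [|x u IH]; first by split => // _ [].
rewrite compatible_cons; split.
  move=> /andP[hh /IH hu] [|[|i]] // _ hi; first by case: u hh {IH hu} hi.
  by move: hi; rewrite /= ltnS => hi; apply: (hu i.+1).
move=> h; apply/andP; split; first by case: u h {IH} => // y u h; apply: (h 1).
by apply/IH => -[|i] // _ hs; apply: (h i.+2).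
Qed.

Lemma gap_ok_letter t k : gap_ok w b t k =
  ((k == 0) || ~~ b (letter t k)) && ((k == size t) || w (letter t k.+1)).
Proof. by case: k. Qed.

Lemma shape_compatible t : uniq t -> all (fun x => 0 < x) t ->
  (forall i, valley_at t i -> w (letter t i)) ->
  (forall i, 0 < i -> i <= size t -> b (letter t i) -> peak_at t i) ->
  (forall i, ~~ ddes_at t i) -> compatible w b t.
Proof.
move=> ut pt hV hP hD; apply/compatibleP => i i0 hi.
have descent_white : letter t i.+1 < letter t i -> w (letter t i.+1).
  move=> hlt; apply: hV; rewrite /valley_at /= hlt hi /=.
  have := hD i.+1; rewrite /ddes_at /= hlt hi /= -leqNgt => hle.
  rewrite ltn_neqAle hle andbT; apply/eqP => e.
  have hpos : 0 < letter t i.+1 := letter_pos pt (ltn0Sn i) hi.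
  case: (ltnP i.+1 (size t)) => hs; last by move: hpos; rewrite e letter_out.
  by have := letter_inj ut (ltn0Sn i) hi (ltn0Sn i.+1) hs e; lia.
apply/andP; split.
  apply/implyP => hb; have := hP i i0 (ltnW hi) hb; rewrite /peak_at => /and4P[_ _ _ hlt].
  by rewrite descent_white.
apply/implyP => hw; rewrite ltn_neqAle; apply/andP; split.
  by apply/eqP => e; have := letter_inj ut i0 (ltnW hi) (ltn0Sn i) hi e; lia.
by rewrite leqNgt; exact: (contra descent_white hw).
Qed.

End Letters.

(* A compatible word with no free gap is called saturated; its peaks, valleys
   and descents are then completely determined by the colours. *)
Section ShapeOfSaturatedWords.
Variables (w b : pred nat) (t : seq nat).
Hypotheses (white_not_black : forall x, w x -> ~~ b x) (ut : uniq t)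
  (pt : all (fun x => 0 < x) t) (ct : compatible w b t) (t0 : 0 < size t)
  (no_gap : forall k, k <= size t -> ~~ gap_ok w b t k).

Let step := iffLR (compatibleP w b t) ct.

(* The front gap is not free: the first letter is not white. *)
Lemma first_not_white : ~~ w (letter t 1).
Proof. by have := no_gap (leq0n _); rewrite gap_ok_letter /= eq_sym (negbTE (lt0n_neq0 t0)). Qed.

(* The end gap is not free: the last letter is black. *)
Lemma last_black : b (letter t (size t)).
Proof.
have := no_gap (leqnn _); rewrite gap_ok_letter eqxx (negbTE (lt0n_neq0 t0)) /= andbT.
by rewrite negbK.
Qed.

(* An inner gap before a white letter is not free: the letter before it is black. *)
Lemma black_before_white k : 0 < k -> k < size t -> w (letter t k.+1) -> b (letter t k).
Proof.
move=> k0 km hw; have := no_gap (ltnW km); rewrite gap_ok_letter hw orbT andbT.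
by rewrite (negbTE (lt0n_neq0 k0)) /= negbK.
Qed.

Lemma descent_black_white i : 0 < i -> i < size t ->
  letter t i.+1 < letter t i -> b (letter t i) && w (letter t i.+1).
Proof.
move=> i0 im hlt; have := step i0 im; rewrite /good_step => /andP[_ /implyP h].
have hw : w (letter t i.+1) by apply/negPn/negP => /h; rewrite ltnNge ltnW.
by rewrite hw black_before_white.
Qed.

Lemma adjacent_letters_neq i : 0 < i -> i < size t -> letter t i != letter t i.+1.
Proof. by move=> i0 im; apply/eqP => /(letter_inj ut i0 (ltnW im) (ltn0Sn i) im); lia. Qed.

Lemma valley_at_white i : 0 < i -> i <= size t -> valley_at t i = w (letter t i).
Proof.
case: i => // -[|i] _ hi; rewrite /valley_at /= hi /=.
  by apply/esym/negbTE; apply: first_not_white.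
apply/idP/idP => [/andP[h _]|hw]; first by case/andP: (descent_black_white (ltn0Sn i) hi h).
have hm : i.+2 < size t.
  rewrite ltn_neqAle hi andbT; apply/eqP => e; move: last_black; rewrite -e.
  by move/negP: (white_not_black hw).
have hb := black_before_white (ltn0Sn i) (ltnW hm) hw.
have := step (ltn0Sn i) (ltnW hm); rewrite /good_step hb /= => /andP[/andP[_ ->] _] /=.
rewrite ltn_neqAle adjacent_letters_neq //= leqNgt.
apply/negP => /(descent_black_white (ltn0Sn _) hm) /andP[hb' _].
by move/negP: (white_not_black hw).
Qed.

Lemma peak_at_black i : 0 < i -> i <= size t -> peak_at t i = b (letter t i).
Proof.
case: i => // i _ hi; rewrite /peak_at /= hi /=; apply/idP/idP.
  move=> /andP[_ h2]; case: (ltnP i.+1 (size t)) => hm.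
    by case/andP: (descent_black_white (ltn0Sn i) hm h2).
  have -> : i.+1 = size t by apply/eqP; rewrite eqn_leq hi hm.
  exact: last_black.
move=> hb; apply/andP; split.
  case: i hi hb => [|i] hi hb; first by rewrite letter_pos.
  have := step (ltn0Sn i) hi; rewrite /good_step => /andP[_ /implyP]; apply.
  by apply/negP => /white_not_black; rewrite hb.
case: (ltnP i.+1 (size t)) => hm.
  by have := step (ltn0Sn i) hm; rewrite /good_step hb /= => /andP[/andP[_ ->] _].
have -> : i.+1 = size t by apply/eqP; rewrite eqn_leq hi hm.
by rewrite letter_out // letter_pos.
Qed.

Lemma no_ddes i : ~~ ddes_at t i.
Proof.
case: i => [|i]; rewrite /ddes_at //=; apply/negP => /and3P[hi h1 h2].
case: i hi h1 h2 => [|i] hi h1 h2; first by rewrite /letter in h1.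
have /andP[_ hw] := descent_black_white (ltn0Sn i) hi h1.
case: (ltnP i.+2 (size t)) => hm.
  by have /andP[hb _] := descent_black_white (ltn0Sn _) hm h2; move/negP: (white_not_black hw).
have e : i.+2 = size t by apply/eqP; rewrite eqn_leq hi hm.
by move: last_black; rewrite -e; move/negP: (white_not_black hw).
Qed.

Lemma saturated_shape :
  [/\ forall i, 0 < i -> i <= size t -> valley_at t i = w (letter t i),
      forall i, 0 < i -> i <= size t -> peak_at t i = b (letter t i),
      forall i, ~~ ddes_at t i,
      forall i, 0 < i -> i < size t -> letter t i.+1 < letter t i ->
        b (letter t i) && w (letter t i.+1)
    & b (letter t (size t))].
Proof.
split; [exact: valley_at_white | exact: peak_at_black | exact: no_ddes
       | exact: descent_black_white | exact: last_black].
Qed.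

End ShapeOfSaturatedWords.

Definition natset N (V : {set 'I_N}) : pred nat := fun x => x \in [seq val y | y <- enum V].

Lemma natset_val N (V : {set 'I_N}) (y : 'I_N) : natset V y = (y \in V).
Proof. by rewrite /natset mem_map ?mem_enum //; exact: val_inj. Qed.

Lemma natsetP N (V : {set 'I_N}) x : natset V x -> exists2 y : 'I_N, y \in V & val y = x.
Proof. by move/mapP => [y]; rewrite mem_enum => hy ->; exists y. Qed.

Lemma card_set_sum (T : finType) (P : pred T) : #|[set x | P x]| = \sum_(x : T) (P x : nat).
Proof. by rewrite -sum1_card big_mkcond /=; apply: eq_bigr => x _; rewrite inE; case: (P x). Qed.

Lemma count_natset_iota N (V : {set 'I_N}) j : (forall y, y \in V -> 0 < val y) -> j < N ->
  count (natset V) (iota 1 j) = #|[set x in V | x < j.+1]|.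
Proof.
move=> V0 jN; rewrite card_set_sum.
rewrite (eq_bigr (fun x : 'I_N => ((natset V x) && (x < j.+1) : nat))); last first.
  by move=> x _; rewrite natset_val.
rewrite -(big_mkord xpredT (fun i => ((natset V i) && (i < j.+1) : nat))).
rewrite -big_mkcond /= -(big_nat_widen _ _ _ _ _ jN) /= big_mkcond /=.
rewrite -[RHS]big_mkcond sum1_count /index_iota subn0 /=.
suff -> : natset V 0 = false by [].
by apply/negP => /natsetP [y /V0 hy e]; rewrite e in hy.
Qed.

Lemma svE m (s : 'S_m) i : sv s i = letter (word_of s) i.
Proof. by []. Qed.

Lemma letter_word_of m (s : 'S_m) (j : 'I_m) : letter (word_of s) j.+1 = (s j).+1.
Proof. exact: nth_word_of. Qed.

Lemma valley_posE m (s : 'S_m) i : is_valley_pos s i = valley_at (word_of s) i.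
Proof. by rewrite /valley_at size_word_of. Qed.

Lemma peak_posE m (s : 'S_m) i : is_peak_pos s i = peak_at (word_of s) i.
Proof. by rewrite /peak_at size_word_of. Qed.

Lemma ddes_posE m (s : 'S_m) i : is_ddes_pos s i = ddes_at (word_of s) i.
Proof. by rewrite /ddes_at size_word_of. Qed.

Lemma value_set_eq m (s : 'S_m) (P : pred nat) (V : {set 'I_m.+1}) :
  (forall y, y \in V -> 0 < val y) -> (forall j : 'I_m, P j.+1 = natset V (s j).+1) ->
  [set x : 'I_m.+1 | [exists i : 'I_m, P i.+1 && (sv s i.+1 == x)]] = V.
Proof.
move=> V0 hP; apply/setP => y; rewrite inE; apply/existsP/idP.
  by case=> j /andP[]; rewrite hP svE letter_word_of => hj /eqP hy; rewrite -natset_val -hy.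
move=> yV; have ym : y.-1 < m by rewrite -ltnS prednK ?V0.
exists ((s^-1)%g (Ordinal ym)); rewrite hP svE letter_word_of permKV /= prednK ?V0 //.
by rewrite natset_val yV eqxx.
Qed.

Section ArtAsDoubleSum.
Local Open Scope ring_scope.

Lemma natz_sum (I : finType) (F : I -> nat) : ((\sum_i F i)%N)%:Z = \sum_i (F i)%:Z.
Proof. by rewrite -natz natr_sum; apply: eq_bigr => i _; rewrite natz. Qed.

Definition larger_right (t : seq nat) (i : nat) : nat :=
  (\sum_(0 <= j < size t) ((i < j) && (nth 0 t i < nth 0 t j)))%N.

Lemma count_as_sum (p : pred nat) s : count p s = (\sum_(0 <= j < size s) p (nth 0 s j))%N.
Proof. by elim: s => [|x s IH]; [rewrite big_geq | rewrite /= big_nat_recl // IH]. Qed.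

Lemma art_word_sum (w b : pred nat) t :
  art_word w b t = \sum_(0 <= i < size t) weight w b (nth 0 t i) * (larger_right t i)%:Z.
Proof.
elim: t => [|x u IH]; first by rewrite big_geq.
rewrite art_word_cons IH /= big_nat_recl //; congr (_ * _ + _).
  by rewrite /larger_right /= big_nat_recl //= add0n count_as_sum.
by apply: eq_bigr => i _; rewrite /larger_right /= big_nat_recl.
Qed.

End ArtAsDoubleSum.

Section AdmissibleSets.
Variables (n : nat) (W B : {set 'I_(n.*2.+2)}).
Hypothesis hA : admissible W B.

Lemma admissible_facts :
  [/\ forall x, natset W x -> ~~ natset B x, forall y, y \in W -> odd y,
      forall y, y \in B -> odd y, #|B| = #|W|.+1 & (ord_max : 'I_(n.*2.+2)) \in B].
Proof.
case/and5P: hA => hd /forallP ho /eqP hc hm _; split => //.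
- by move=> x /natsetP[y hy <-]; rewrite natset_val (disjointFr hd hy).
- by move=> y hy; have := ho y; rewrite inE hy.
- by move=> y hy; have := ho y; rewrite inE hy orbT.
Qed.

Lemma odd_set_pos (V : {set 'I_(n.*2.+2)}) : (forall y, y \in V -> odd y) ->
  forall y, y \in V -> 0 < val y.
Proof. by move=> oV y /oV; apply: odd_gt0. Qed.

Lemma count_natset_perm (V : {set 'I_(n.*2.+2)}) t : (forall y, y \in V -> odd y) ->
  perm_eq t (iota 1 n.*2.+1) -> count (natset V) t = #|V|.
Proof.
move=> oV pt; rewrite (seq.permP pt) count_natset_iota //; last exact: odd_set_pos.
by apply: eq_card => x; rewrite inE ltn_ord andbT.
Qed.

(* Since #B = #W + 1, every compatible word coloured by (W, B) is saturated. *)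
Lemma word_saturated (s : 'S_(n.*2.+1)) : compatible (natset W) (natset B) (word_of s) ->
  forall k, k <= size (word_of s) -> ~~ gap_ok (natset W) (natset B) (word_of s) k.
Proof.
case: admissible_facts => wb oW oB cB _ ct; apply: no_free_gap => //.
by rewrite !count_natset_perm ?perm_word_of // cB addn1.
Qed.

Lemma word_shape (s : 'S_(n.*2.+1)) : compatible (natset W) (natset B) (word_of s) ->
  let t := word_of s in
  [/\ forall i, 0 < i -> i <= size t -> valley_at t i = natset W (letter t i),
      forall i, 0 < i -> i <= size t -> peak_at t i = natset B (letter t i),
      forall i, ~~ ddes_at t i,
      forall i, 0 < i -> i < size t -> letter t i.+1 < letter t i ->
        natset B (letter t i) && natset W (letter t i.+1)
    & natset B (letter t (size t))].
Proof.
case: admissible_facts => wb _ _ _ _ ct; apply: saturated_shape => //.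
- exact: uniq_word_of.
- exact: word_of_pos.
- by rewrite size_word_of.
exact: word_saturated.
Qed.

Lemma hatA_compatible (s : 'S_(n.*2.+1)) :
  hatA W B s -> compatible (natset W) (natset B) (word_of s).
Proof.
case/and3P => [/and3P[_ /forallP hD _] /eqP hV /eqP hP].
have st : size (word_of s) = n.*2.+1 by rewrite size_word_of.
apply: shape_compatible; [exact: uniq_word_of | exact: word_of_pos | | |].
- move=> i hv; have := hv; rewrite /valley_at => /and4P[i0 im _ _].
  case: i i0 im hv => // i _; rewrite st => im hv.
  have xl : letter (word_of s) i.+1 < n.*2.+2 by rewrite (letter_word_of s (Ordinal im)) ltnS ltn_ord.
  rewrite (_ : letter _ _ = Ordinal xl) // natset_val -hV inE; apply/existsP.
  by exists (Ordinal im); rewrite valley_posE hv eqxx.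
- move=> i i0 im /natsetP[y]; rewrite -hP inE => /existsP[j /andP[hpk /eqP hy]] e.
  rewrite peak_posE in hpk.
  have jt : j.+1 <= size (word_of s) by rewrite st ltn_ord.
  have ji : j.+1 = i by apply: (letter_inj (uniq_word_of s) (ltn0Sn j) jt i0 im); rewrite -svE hy e.
  by rewrite -ji.
move=> i; rewrite -ddes_posE; apply/negP => hd.
have := hd; rewrite /is_ddes_pos => /and4P[i0 im _ _].
case: i i0 im hd => // i _ im hd.
by move/negP: (hD (Ordinal im)).
Qed.

Lemma compatible_hatA (s : 'S_(n.*2.+1)) :
  compatible (natset W) (natset B) (word_of s) -> hatA W B s.
Proof.
move=> ct; case: (word_shape ct); rewrite size_word_of => hV hP hD hdes hlast.
case: admissible_facts => _ oW oB _ _.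
have odd_letter : forall v, natset W v || natset B v -> odd v.
  by move=> v /orP[] /natsetP[y hy <-]; [apply: oW | apply: oB].
apply/and3P; split.
- apply/and3P; split.
  + apply/andP; split; last by rewrite odd_letter // hlast orbT.
    apply/forallP => i; apply/implyP => hi; apply/implyP => hlt.
    have /andP[h1 h2] := hdes i.+1 (ltn0Sn i) hi hlt.
    by rewrite !odd_letter // ?h1 ?h2 ?orbT.
  + by apply/forallP => i; rewrite ddes_posE.
  + by have := hP _ (ltn0Sn _) (leqnn _); rewrite hlast /peak_at => /and4P[_ _ h _].
- apply/eqP/value_set_eq; first exact: odd_set_pos.
  by move=> j; rewrite valley_posE hV ?ltn_ord ?letter_word_of.
apply/eqP/value_set_eq; first exact: odd_set_pos.
by move=> j; rewrite peak_posE hP ?ltn_ord ?letter_word_of.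
Qed.

(* On \hat A, the art of sigma is the art of its word (exchange of summations). *)
Lemma art_word_of (s : 'S_(n.*2.+1)) : compatible (natset W) (natset B) (word_of s) ->
  art s = art_word (natset W) (natset B) (word_of s).
Proof.
move=> ct; case: (word_shape ct); rewrite size_word_of => hV hP _ _ _.
have E : forall y : 'I_(n.*2.+1), ((vcount s y)%:Z - (pcount s y)%:Z)%R =
    (\sum_(j : 'I_(n.*2.+1)) weight (natset W) (natset B) (s j).+1 *
       (((s j < y) && (j < (s^-1)%g y))%N : nat)%:Z)%R.
  move=> y; rewrite /vcount /pcount !card_set_sum !natz_sum -sumrB; apply: eq_bigr => j _.
  rewrite valley_posE peak_posE hV ?hP ?ltn_ord // letter_word_of /weight.
  by case: (natset W _); case: (natset B _); case: (_ < _)%N; case: (_ < _)%N.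
rewrite art_word_sum size_word_of big_mkord /art (eq_bigr _ (fun y _ => E y)) exchange_big /=.
apply: eq_bigr => j _; rewrite -mulr_sumr nth_word_of; congr (_ * _)%R.
rewrite /larger_right size_word_of big_mkord natz_sum (reindex_inj (@perm_inj _ s)) /=.
by apply: eq_bigr => k _; rewrite permK !nth_word_of ltnS andbC.
Qed.

Lemma hatA_iff (s : 'S_(n.*2.+1)) : hatA W B s = compatible (natset W) (natset B) (word_of s).
Proof. by apply/idP/idP; [exact: hatA_compatible | exact: compatible_hatA]. Qed.

Lemma count_iota_avec j : j < n.*2.+2 ->
  count (natset W) (iota 1 j) + 1 - count (natset B) (iota 1 j) = avec W B j.+1.
Proof.
case: admissible_facts => _ oW oB _ _ jN.
by rewrite /avec !count_natset_iota ?addn1 //; exact: odd_set_pos.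
Qed.

(* The last letter 2n+1 contributes the factor [a(2n+1)]_q = [1]_q = 1. *)
Lemma avec_last : avec W B n.*2.+1 = 1.
Proof.
rewrite /avec; case: admissible_facts => _ _ _ cB mB; have hd : [disjoint W & B] by case/and5P: hA.
have below_max : forall x : 'I_(n.*2.+2), (x < n.*2.+1) = (x != ord_max).
  by move=> x; rewrite -(inj_eq val_inj) /= ltn_neqAle -ltnS ltn_ord andbT.
have -> : [set x in W | x < n.*2.+1] = W.
  apply/setP => x; rewrite !inE below_max andb_idr //; apply: contraL => /eqP ->.
  by rewrite (disjointFl hd mB).
have -> : [set x in B | x < n.*2.+1] = B :\ ord_max.
  by apply/setP => x; rewrite !inE below_max andbC.
by have := cardsD1 ord_max B; rewrite mB cB add1n => -[<-]; rewrite subSnn.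
Qed.

End AdmissibleSets.

Unset Implicit Arguments.
Local Open Scope ring_scope.

Theorem mainTheorem7 (n : nat) (W B : {set 'I_(n.*2.+2)})
  (hn : (1 <= n)%N) (hA : admissible W B)
  (R : fieldType) (q : R) (hq : q != 0) :
  \sum_(s : 'S_(n.*2.+1) | hatA W B s) q ^ (art s)
  = \prod_(1 <= i < n.*2.+1) qint q (avec W B i).
Proof.
case: (admissible_facts hA) => wb _ _ _ _.
rewrite (eq_bigl (fun s => compatible (natset W) (natset B) (word_of s))); last first.
  by move=> s; rewrite hatA_iff.
rewrite (eq_bigr (fun s => q ^ art_word (natset W) (natset B) (word_of s))); last first.
  by move=> s ct; rewrite (art_word_of hA).
rewrite (sum_perm_words n.*2.+1 (fun t => compatible (natset W) (natset B) t)
                        (fun t => q ^ art_word (natset W) (natset B) t)).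
rewrite -[LHS]big_filter sum_words // big_nat_recr //= (count_iota_avec hA) //.
rewrite (avec_last hA) /qint big_ord1 expr0 mulr1 big_add1 /=.
by apply: eq_big_nat => j /andP[_ hj]; rewrite (count_iota_avec hA) //; lia.
Qed.
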